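(* Assume that the GAFS sequence satisfies $x_k\to x^*$ and $c^Tx_k>c^Tx^*$ for all $k\ge 0$. Define $u_k=\frac{X_ks_k}{c^Tx_k-c^Tx^*}$, $r_k=\frac{\gamma_k}{c^Tx_k-c^Tx^*}$ and $p_k=\gamma_kX_k^{-1}e$, where $e=(1,\dots,1)^T$. Then for all $k\ge 0$: $$\frac{c^Tx_{k+1}-c^Tx^*}{c^Tx_k-c^Tx^*}=1-\alpha\sum_{j=0}^{k}\frac{\|u_j\|^2}{\gamma(u_j)}\frac{r_k}{r_j},$$ and for every coordinate $j=1,\dots,n$, $$\frac{(x_{k+1})_j}{(x_k)_j}=1-\alpha\sum_{i=0}^{k}\frac{(u_i)_j}{\gamma(u_i)}\frac{(p_k)_j}{(p_i)_j}.$$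
   Context: Let $A\in\mathbb{R}^{m\times n}$ have rank $m$, $b\in\mathbb{R}^m$, $c\in\mathbb{R}^n$. Primal LP: $\min c^Tx$ s.t. $Ax=b$, $x\ge 0$; dual LP: $\max b^Ty$ s.t. $A^Ty+s=c$, $s\ge 0$. Standing assumptions: the primal has a strictly positive feasible point; $c^Tx$ is not constant on the primal feasible region; the LP has an optimal solution. For $u\in\mathbb{R}^n$, $\gamma(u)=\max\{u_i: u_i>0\}$; $\|\cdot\|$ is the Euclidean norm. For $x>0$, $X=\mathrm{diag}(x)$. GAFS sequence: fix $\alpha\in(0,1)$, $\beta\in[0,1)$, and $x_0>0$ with $Ax_0=b$. For $k\ge0$ let $X_k=\mathrm{diag}(x_k)$, $y_k=(AX_k^2A^T)^{-1}AX_k^2c$, $s_k=c-A^Ty_k$. Set $x_1=x_0-\alpha\frac{X_0^2s_0}{\gamma(X_0s_0)}$ and, for $k\ge1$, $x_{k+1}=x_k-\alpha\frac{X_k^2s_k}{\gamma(X_ks_k)}+\beta\frac{x_k-x_{k-1}}{\|X_k^{-1}(x_k-x_{k-1})\|_\infty}$ (it is assumed all quantities are well defined, i.e. $X_ks_k$ has a positive entry and $x_k\ne x_{k-1}$). Write $\delta(x_k)=x_k-x_{k-1}$, $\alpha_k=\alpha/\gamma(X_ks_k)$, $\beta_k=\beta/\|X_k^{-1}\delta(x_k)\|_\infty$ ($k\ge1$), $\gamma_0=1$, $\gamma_k=\prod_{j=1}^k\beta_j$. *)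

(* the claim is an algebraic identity over an ordered field;
   we state it for an arbitrary realFieldType R (which includes the reals). *)
From HB Require Import structures.
From mathcomp Require Import all_boot all_order all_algebra.
Set Implicit Arguments. Unset Strict Implicit. Unset Printing Implicit Defensive.
Import Order.TTheory GRing.Theory Num.Theory.
Local Open Scope ring_scope.

Section GAFSDefs.
Variable R : realFieldType.

Definition dotv n (c x : 'cV[R]_n) : R := \sum_i c i 0 * x i 0.

Definition sqnorm n (u : 'cV[R]_n) : R := \sum_i (u i 0) ^+ 2.

Definition ninf n (u : 'cV[R]_n) : R := \big[Num.max/0]_i `|u i 0|.

Definition gam n (u : 'cV[R]_n) : R := \big[Num.max/0]_(i | 0 < u i 0) u i 0.

Definition Xm n (x : 'cV[R]_n) : 'M[R]_n := diag_mx (x^T).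

Definition onev n : 'cV[R]_n := const_mx 1.

Definition yv m n (A : 'M[R]_(m, n)) (c x : 'cV[R]_n) : 'cV[R]_m :=
  invmx (A *m Xm x *m Xm x *m A^T) *m (A *m Xm x *m Xm x *m c).

Definition sv m n (A : 'M[R]_(m, n)) (c x : 'cV[R]_n) : 'cV[R]_n :=
  c - A^T *m yv A c x.

Definition is_GAFS m n (A : 'M[R]_(m, n)) (c : 'cV[R]_n) (alpha beta : R)
    (x : nat -> 'cV[R]_n) : Prop :=
  x 1%N = x 0%N - (alpha / gam (Xm (x 0%N) *m sv A c (x 0%N)))
                   *: (Xm (x 0%N) *m Xm (x 0%N) *m sv A c (x 0%N)) /\
  forall k : nat,
    x k.+2 = x k.+1
      - (alpha / gam (Xm (x k.+1) *m sv A c (x k.+1)))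
          *: (Xm (x k.+1) *m Xm (x k.+1) *m sv A c (x k.+1))
      + (beta / ninf (invmx (Xm (x k.+1)) *m (x k.+1 - x k)))
          *: (x k.+1 - x k).

(* beta_k = beta / ||X_k^{-1} delta(x_k)||_inf  (used for k >= 1) *)
Definition betak n (beta : R) (x : nat -> 'cV[R]_n) (k : nat) : R :=
  beta / ninf (invmx (Xm (x k)) *m (x k - x k.-1)).

Definition gammak n (beta : R) (x : nat -> 'cV[R]_n) (k : nat) : R :=
  \prod_(1 <= j < k.+1) betak beta x j.

End GAFSDefs.

(* Unrolling the momentum term writes the GAFS increment as
   x_{k+1} - x_k = - sum_{j<=k} (gamma_k/gamma_j) alpha_j X_j^2 s_j.
   Since A X_j^2 s_j = 0 (the affine-scaling direction stays in the null space
   of A) and c = s_j + A^T y_j, the objective decrease along X_j^2 s_j is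
   c^T X_j^2 s_j = ||X_j s_j||^2.  Dividing by c^T x_k - c^T x^* (resp. by
   (x_k)_j) and rescaling each term into u_j, r_j, p_j gives both identities. *)
From HB Require Import structures.
From mathcomp Require Import all_boot all_order all_algebra.
From mathcomp Require Import ring.
Set Implicit Arguments. Unset Strict Implicit. Unset Printing Implicit Defensive.
Import Order.TTheory GRing.Theory Num.Theory.
Local Open Scope ring_scope.

Lemma gram_unitmx (R : realFieldType) m n (B : 'M[R]_(m, n)) :
  row_free B -> B *m B^T \in unitmx.
Proof.
move=> freeB; rewrite -row_free_unit; apply: inj_row_free => v vBBt0.
have vB0 : v *m B = 0.
  have : (v *m B *m (v *m B)^T) 0 0 = 0.
    by rewrite trmx_mul mulmxA -(mulmxA v) vBBt0 mul0mx mxE.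
  rewrite mxE; under eq_bigr => j _ do rewrite [_^T _ _]mxE -expr2.
  move/(psumr_eq0P (fun j _ => sqr_ge0 _)) => sq0.
  by apply/rowP => j; rewrite [RHS]mxE; apply/eqP; rewrite -sqrf_eq0 sq0.
by apply/eqP; rewrite -(mulmx_free_eq0 _ freeB) vB0.
Qed.

Lemma momentum_increment (R : fieldType) (V : lmodType R) (y d : nat -> V)
    (b : nat -> R) :
  y 1%N = y 0%N - d 0%N ->
  (forall k, y k.+2 = y k.+1 - d k.+1 + b k.+1 *: (y k.+1 - y k)) ->
  (forall k, \prod_(1 <= j < k.+1) b j != 0) ->
  forall k, y k.+1 - y k =
    - \sum_(j < k.+1) ((\prod_(1 <= i < k.+1) b i) / \prod_(1 <= i < j.+1) b i) *: d j.
Proof.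
move=> y1 yrec g0; elim=> [|k IHk].
  by rewrite big_ord1 divff // scale1r y1 addrAC subrr add0r.
rewrite yrec IHk [in RHS]big_ord_recr /= divff // scale1r scalerN.
have gS : \prod_(1 <= i < k.+2) b i = b k.+1 * \prod_(1 <= i < k.+1) b i.
  by rewrite big_nat_recr //= mulrC.
under [\sum_(j < k.+1) (\prod_(1 <= i < k.+2) b i / _) *: d j]eq_bigr => j _
  do rewrite gS -mulrA -scalerA.
by rewrite -scaler_sumr addrAC [y k.+1 - _ - _]addrAC subrr add0r opprD addrC.
Qed.

Lemma divr_sub_sum (R : fieldType) k (a alpha : R) (F G : 'I_k -> R) :
  a != 0 -> (forall i, F i = alpha * G i * a) ->
  (a - \sum_i F i) / a = 1 - alpha * \sum_i G i.
Proof.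
move=> a0 FG; rewrite mulrBl divff // (eq_bigr _ (fun i _ => FG i)).
by rewrite -mulr_suml mulfK // mulr_sumr.
Qed.

Section DiagonalScaling.
Variable R : realFieldType.

Lemma mul_XmE n (x v : 'cV[R]_n) i : (Xm x *m v) i 0 = x i 0 * v i 0.
Proof. by rewrite /Xm mul_diag_mx !mxE. Qed.

Lemma Xm_unit n (x : 'cV[R]_n) : (forall i, 0 < x i 0) -> Xm x \in unitmx.
Proof.
move=> xpos; rewrite unitmxE det_diag unitfE; apply/prodf_neq0 => i _.
by rewrite mxE gt_eqF.
Qed.

Lemma invXm_onevE n (x : 'cV[R]_n) i : (forall i, 0 < x i 0) ->
  (invmx (Xm x) *m onev R n) i 0 = (x i 0)^-1.
Proof.
move=> xpos; have xi0 : x i 0 != 0 by rewrite gt_eqF.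
have := congr1 (fun v : 'cV[R]_n => v i 0) (mulKVmx (Xm_unit xpos) (onev R n)).
by rewrite /= mul_XmE [in X in _ = X]mxE => xw1; rewrite -[RHS]mulr1 -xw1 mulKf.
Qed.

Lemma gamZ n a (v : 'cV[R]_n) : 0 < a -> gam (a *: v) = a * gam v.
Proof.
move=> a_gt0; rewrite /gam.
under eq_bigl => i do rewrite mxE pmulr_rgt0 //.
under eq_bigr => i _ do rewrite mxE.
apply: (big_rec2 (fun s t => s = a * t)); first by rewrite mulr0.
by move=> i s t _ ->; rewrite maxr_pMr // ltW.
Qed.

Lemma gam_gt0 n (v : 'cV[R]_n) : (exists i, 0 < v i 0) -> 0 < gam v.
Proof.
by case=> i vi_gt0; rewrite /gam (bigD1 i) //= (lt_le_trans vi_gt0) // le_max lexx.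
Qed.

Lemma sqnormZ n a (v : 'cV[R]_n) : sqnorm (a *: v) = a ^+ 2 * sqnorm v.
Proof. by rewrite /sqnorm mulr_sumr; apply: eq_bigr => i _; rewrite mxE exprMn. Qed.

Lemma dotvE n (u w : 'cV[R]_n) : dotv u w = (u^T *m w) 0 0.
Proof. by rewrite /dotv mxE; apply: eq_bigr => i _; rewrite mxE. Qed.

End DiagonalScaling.

Section ReducedCost.
Variables (R : realFieldType) (m n : nat) (A : 'M[R]_(m, n)) (c x : 'cV[R]_n).
Hypotheses (rankA : \rank A = m) (xpos : forall i, 0 < x i 0).

Lemma unitmx_AXXA : A *m Xm x *m Xm x *m A^T \in unitmx.
Proof.
have -> : A *m Xm x *m Xm x *m A^T = A *m Xm x *m (A *m Xm x)^T.
  by rewrite trmx_mul /Xm tr_diag_mx !mulmxA.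
apply: gram_unitmx.
by rewrite /row_free mxrankMfree ?rankA // row_free_unit Xm_unit.
Qed.

Lemma mulmx_A_XXsv : A *m (Xm x *m (Xm x *m sv A c x)) = 0.
Proof.
rewrite mulmxA /sv /yv mulmxBr mulmxBr !mulmxA -[X in _ - X]mulmxA.
by rewrite mulmxV ?unitmx_AXXA // mul1mx !mulmxA subrr.
Qed.

Lemma dotv_XXsv :
  dotv c (Xm x *m (Xm x *m sv A c x)) = sqnorm (Xm x *m sv A c x).
Proof.
have c_split : c = sv A c x + A^T *m yv A c x by rewrite /sv subrK.
rewrite dotvE {1}c_split linearD /= mulmxDl mxE trmx_mul trmxK -mulmxA.
rewrite mulmx_A_XXsv mulmx0 [X in _ + X]mxE addr0 /sqnorm mxE.
by apply: eq_bigr => i _; rewrite mxE !mul_XmE; ring.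
Qed.

End ReducedCost.

Section GAFSIncrement.
Variables (R : realFieldType) (m n : nat) (A : 'M[R]_(m, n)) (c : 'cV[R]_n).
Variables (alpha beta : R) (x : nat -> 'cV[R]_n).
Hypotheses (rankA : \rank A = m) (xpos : forall k i, 0 < x k i 0).
Hypotheses (gafs : is_GAFS A c alpha beta x) (gamma_neq0 : forall k, gammak beta x k != 0).

Let v j := Xm (x j) *m sv A c (x j).
Let weight k j := gammak beta x k / gammak beta x j * (alpha / gam (v j)).

Lemma gafs_increment k :
  x k.+1 - x k = - \sum_(j < k.+1) weight k j *: (Xm (x j) *m v j).
Proof.
have [x1 xrec] := gafs.
rewrite (momentum_increment
  (d := fun j => (alpha / gam (v j)) *: (Xm (x j) *m Xm (x j) *m sv A c (x j)))
  (b := betak beta x) x1 xrec gamma_neq0).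
by congr (- _); apply: eq_bigr => j _; rewrite scalerA mulmxA.
Qed.

Lemma gafs_increment_coord k i :
  x k.+1 i 0 = x k i 0 - \sum_(j < k.+1) weight k j * (x j i 0 * v j i 0).
Proof.
have := congr1 (fun w : 'cV[R]_n => w i 0) (gafs_increment k).
rewrite /= !mxE summxE => e; rewrite -[LHS](subrK (x k i 0)) e addrC.
by congr (_ - _); apply: eq_bigr => j _; rewrite mxE mul_XmE.
Qed.

Lemma gafs_objective_decrement k :
  dotv c (x k.+1) = dotv c (x k) - \sum_(j < k.+1) weight k j * sqnorm (v j).
Proof.
rewrite {1}/dotv; under eq_bigr => i _ do rewrite gafs_increment_coord mulrBr mulr_sumr.
rewrite sumrB exchange_big /=; congr (_ - _); apply: eq_bigr => j _.
rewrite -dotv_XXsv // /dotv mulr_sumr; apply: eq_bigr => i _.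
by rewrite !mul_XmE mulrCA.
Qed.

End GAFSIncrement.

Theorem theorem1 (R : realFieldType) (m n : nat)
  (A : 'M[R]_(m, n)) (b : 'cV[R]_m) (c : 'cV[R]_n)
  (alpha beta : R) (x : nat -> 'cV[R]_n) (xs : 'cV[R]_n)
  (* standing assumptions *)
  (hrank : \rank A = m)
  (hstrict : exists z : 'cV[R]_n, A *m z = b /\ forall i, 0 < z i 0)
  (hnonconst : exists z1 z2 : 'cV[R]_n,
      A *m z1 = b /\ (forall i, 0 <= z1 i 0) /\
      A *m z2 = b /\ (forall i, 0 <= z2 i 0) /\ dotv c z1 != dotv c z2)
  (hopt : exists zo : 'cV[R]_n,
      A *m zo = b /\ (forall i, 0 <= zo i 0) /\
      forall z : 'cV[R]_n, A *m z = b -> (forall i, 0 <= z i 0) ->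
        dotv c zo <= dotv c z)
  (* parameters and initial point *)
  (halpha : 0 < alpha < 1) (hbeta : 0 <= beta < 1)
  (hx0pos : forall i, 0 < x 0%N i 0) (hx0feas : A *m x 0%N = b)
  (* GAFS recursion *)
  (hgafs : is_GAFS A c alpha beta x)
  (* well-definedness of all quantities *)
  (hxpos : forall k i, 0 < x k i 0)
  (hgam : forall k, exists i, 0 < (Xm (x k) *m sv A c (x k)) i 0)
  (hdelta : forall k, x k.+1 != x k)
  (hgk : forall k, gammak beta x k != 0)
  (* x_k -> x^* and c^T x_k > c^T x^* *)
  (hconv : forall eps : R, 0 < eps -> exists N : nat, forall k, (N <= k)%N ->
      forall i, `|x k i 0 - xs i 0| < eps)
  (habove : forall k, dotv c xs < dotv c (x k)) :
  let u := fun k => (dotv c (x k) - dotv c xs)^-1 *: (Xm (x k) *m sv A c (x k)) in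
  let r := fun k => gammak beta x k / (dotv c (x k) - dotv c xs) in
  let p := fun k => gammak beta x k *: (invmx (Xm (x k)) *m onev R n) in
  forall k : nat,
    (dotv c (x k.+1) - dotv c xs) / (dotv c (x k) - dotv c xs)
      = 1 - alpha * \sum_(j < k.+1) (sqnorm (u j) / gam (u j)) * (r k / r j)
    /\
    forall j : 'I_n,
      x k.+1 j 0 / x k j 0
        = 1 - alpha * \sum_(i < k.+1) ((u i) j 0 / gam (u i)) * ((p k) j 0 / (p i) j 0).
Proof.
move=> u r p k.
have gap_gt0 j : 0 < dotv c (x j) - dotv c xs by rewrite subr_gt0.
have cost_gam_gt0 j : 0 < gam (Xm (x j) *m sv A c (x j)) by apply: gam_gt0.
split.
  rewrite (gafs_objective_decrement hrank hxpos hgafs hgk) addrAC.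
  apply: divr_sub_sum => [|j]; first by rewrite gt_eqF.
  rewrite /u /r sqnormZ gamZ ?invr_gt0 //.
  by field; rewrite hgk !gt_eqF.
move=> i; rewrite (gafs_increment_coord hgafs hgk).
apply: divr_sub_sum => [|j]; first by rewrite gt_eqF.
rewrite /u /p gamZ ?invr_gt0 // ![(_ *: _ : 'cV[R]_n) _ _]mxE !invXm_onevE //.
by field; rewrite hgk !gt_eqF.
Qed.
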